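(* Consider the distributed energy beamforming setting and protocol described in the context, with $M\ge 2$ energy transmitters, channel power gains $\beta_1,\dots,\beta_M>0$, channel phases $\theta_1,\dots,\theta_M\in[-\pi,\pi)$, transmit power $P>0$, and $N\ge1$ feedback intervals per transmitter, and let $\eta=Q_{\mathrm d}/Q^\star$ be the resulting efficiency. Let $0<\hat\eta\le 1$ be a target efficiency. If $$N\ \ge\ \log_2\left(\frac{\pi}{\arccos\left(\sqrt{\hat\eta-\dfrac{(1-\hat\eta)\sum_{m=1}^M\beta_m}{\sum_{i,j=1,\,i\ne j}^M\sqrt{\beta_i\beta_j}}}\right)}\right),$$ then $\eta\ge\hat\eta$.
   Context: Setting: $M$ single-antenna energy transmitters ET$_1,\dots,$ET$_M$ send power to one energy receiver (ER). If ET$_m$ transmits with phase $\phi_m$ (each with power $P$), the harvested power at the ER is $Q(\phi_1,\dots,\phi_M)=P\big|\sum_{m}\sqrt{\beta_m}e^{\mathrm{i}(\phi_m-\theta_m)}\big|^2$, where idle transmitters contribute nothing; the phases $\theta_m$ are unknown to the transmitters. Protocol: ET$_1$ transmits with fixed phase $\bar\phi_1=0$. Then for $m=2,\dots,M$ in turn, with ET$_1,\dots,$ET$_{m-1}$ transmitting with fixed phases $\bar\phi_1,\dots,\bar\phi_{m-1}$ and the others idle, ET$_m$ runs algorithm (A1) below and thereafter transmits with the resulting phase $\bar\phi_m$. Here $Q_m(\phi)=P\big|\sqrt{\beta_m}e^{\mathrm{i}(\phi-\theta_m)}+\sum_{i=1}^{m-1}\sqrt{\beta_i}e^{\mathrm{i}(\bar\phi_i-\theta_i)}\big|^2$.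 Algorithm (A1) for ET$_m$: initialize $\mathcal A^{(1)}=[-\pi,\pi)$, $\psi=0$, $\psi'=-\pi$. For $n=1,\dots,N$: ET$_m$ transmits with phase $\psi$ and then $\psi'$; the ER feeds back one bit indicating whether $Q_m(\psi)>Q_m(\psi')$ (exact measurements). If $Q_m(\psi)>Q_m(\psi')$, set $\mathcal A^{(n+1)}=\mathcal A^{(n)}\setminus\{\theta\in[-\pi,\pi):\cos(\theta-\psi)<\cos(\theta-\psi')\}$, otherwise $\mathcal A^{(n+1)}=\mathcal A^{(n)}\setminus\{\theta\in[-\pi,\pi):\cos(\theta-\psi)>\cos(\theta-\psi')\}$; then set $\psi=\max_{\theta\in\mathcal A^{(n+1)}}\theta$, $\psi'=\min_{\theta\in\mathcal A^{(n+1)}}\theta$. Output $\bar\phi_m=(\psi+\psi')/2$. Finally $Q_{\mathrm d}=Q(\bar\phi_1,\dots,\bar\phi_M)$, $Q^\star=P\big(\sum_{m}\sqrt{\beta_m}\big)^2=P\big(\sum_m\beta_m+\sum_{i\ne j}\sqrt{\beta_i\beta_j}\big)$, and $\eta=Q_{\mathrm d}/Q^\star$. The right-hand side of the condition on $N$ is understood whenever it is well defined (the expression under the square root lies in $[0,1]$). *)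

From Stdlib Require Import Reals Lra.
Open Scope R_scope.

(* Indices are 0-based: transmitter ET_{m+1} of the paper has index m < M. *)

Fixpoint sumR (n : nat) (f : nat -> R) : R :=
  match n with
  | O => 0
  | S k => sumR k f + f k
  end.

(* Harvested power when transmitters 0..K-1 are active with phases phi
   (the others idle):  P * | sum_{i<K} sqrt(beta_i) e^{i(phi_i - theta_i)} |^2,
   the squared modulus written out as (real part)^2 + (imaginary part)^2. *)
Definition Qpow (P : R) (beta theta phi : nat -> R) (K : nat) : R :=
  P * ((sumR K (fun i => sqrt (beta i) * cos (phi i - theta i))) ^ 2
       + (sumR K (fun i => sqrt (beta i) * sin (phi i - theta i))) ^ 2).

(* One bisection step of algorithm (A1): the current feasible arc is
   [lo, hi] (unwrapped), psi = hi (max), psi' = lo (min). *)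
Definition a1_step (Qm : R -> R) (lh : R * R) : R * R :=
  let (lo, hi) := lh in
  let mid := (lo + hi) / 2 in
  if Rlt_dec (Qm lo) (Qm hi) then (mid, hi) else (lo, mid).

Fixpoint a1_iter (Qm : R -> R) (k : nat) (lh : R * R) : R * R :=
  match k with
  | O => lh
  | S k' => a1_iter Qm k' (a1_step Qm lh)
  end.

(* Algorithm (A1) with N >= 1 feedback intervals: the first interval compares
   psi = 0 with psi' = -pi on the full circle A^(1) = [-pi, pi); the remaining
   arc is [-pi/2, pi/2] or (circularly) [pi/2, 3pi/2].  Then N-1 further
   bisection steps; output the midpoint of the final arc. *)
Definition a1 (Qm : R -> R) (N : nat) : R :=
  let lh1 := if Rlt_dec (Qm (- PI)) (Qm 0) then (- PI / 2, PI / 2)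
             else (PI / 2, 3 * PI / 2) in
  let lh := a1_iter Qm (N - 1) lh1 in
  (fst lh + snd lh) / 2.

(* phases m : the fixed phases of transmitters 0..m-1 after they have run the
   protocol (entries at indices >= m are irrelevant, set to 0). *)
Fixpoint phases (P : R) (beta theta : nat -> R) (N : nat) (m : nat) : nat -> R :=
  match m with
  | O => fun _ => 0
  | S k =>
      let prev := phases P beta theta N k in
      match k with
      | O => prev
      | _ => fun i =>
          if Nat.eqb i k then
            a1 (fun psi => Qpow P beta theta
                             (fun j => if Nat.eqb j k then psi else prev j) (S k)) N
          else prev i
      end
  end.

Definition Qd (P : R) (beta theta : nat -> R) (M N : nat) : R :=
  Qpow P beta theta (phases P beta theta N M) M.

Definition Qstar (P : R) (beta : nat -> R) (M : nat) : R :=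
  P * (sumR M (fun m => sqrt (beta m))) ^ 2.

Definition efficiency (P : R) (beta theta : nat -> R) (M N : nat) : R :=
  Qd P beta theta M N / Qstar P beta M.

Definition log2 (x : R) : R := ln x / ln 2.

Definition cross_sum (beta : nat -> R) (M : nat) : R :=
  sumR M (fun i => sumR M (fun j =>
    if Nat.eqb i j then 0 else sqrt (beta i * beta j))).

Definition radicand (beta : nat -> R) (M : nat) (etahat : R) : R :=
  etahat - (1 - etahat) * sumR M beta / cross_sum beta M.

From Stdlib Require Import Reals Lra Lia.
Open Scope R_scope.

(* Write S_m for the complex partial sum sum_{i<m} sqrt(beta_i) e^{i(phi_i - theta_i)},
   and c = cos (PI / 2^N).  Once ET_1..ET_m are fixed, Q_{m+1}(psi) equals
   P (|S_m|^2 + beta_m + 2 sqrt(beta_m) |S_m| cos (psi - theta_m - arg S_m)), a shifted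
   cosine of psi.  On such a function every comparison of (A1) keeps the half-arc
   containing the maximiser, so the output lies within PI / 2^N of it and
   |S_{m+1}|^2 >= |S_m|^2 + beta_m + 2 c sqrt(beta_m) |S_m|.  By induction
   |S_M|^2 >= (1 - c^2) sum beta + c^2 (sum sqrt beta)^2, and the condition on N says
   exactly that c^2 dominates the radicand, which turns this bound into
   eta >= etahat. *)

Lemma sumR_ext n f g : (forall i, (i < n)%nat -> f i = g i) -> sumR n f = sumR n g.
Proof.
  induction n as [|n IH]; intros H; simpl; [reflexivity|].
  rewrite IH by (intros; apply H; lia). rewrite H by lia. reflexivity.
Qed.

Lemma sumR_scal_l n k f : sumR n (fun i => k * f i) = k * sumR n f.
Proof. induction n as [|n IH]; simpl; [|rewrite IH]; ring. Qed.

Lemma sumR_scal_r n k f : sumR n (fun i => f i * k) = sumR n f * k.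
Proof. induction n as [|n IH]; simpl; [|rewrite IH]; ring. Qed.

Lemma sumR_sub n f g : sumR n (fun i => f i - g i) = sumR n f - sumR n g.
Proof. induction n as [|n IH]; simpl; [|rewrite IH]; ring. Qed.

Lemma sumR_nonneg n f : (forall i, (i < n)%nat -> 0 <= f i) -> 0 <= sumR n f.
Proof.
  induction n as [|n IH]; intros H; simpl; [lra|].
  assert (0 <= sumR n f) by (apply IH; intros; apply H; lia).
  assert (0 <= f n) by (apply H; lia). lra.
Qed.

Lemma sumR_pos n f : (1 <= n)%nat -> (forall i, (i < n)%nat -> 0 < f i) -> 0 < sumR n f.
Proof.
  intros Hn H. destruct n as [|n]; [lia|]. simpl.
  assert (0 <= sumR n f) by (apply sumR_nonneg; intros; left; apply H; lia).
  assert (0 < f n) by (apply H; lia). lra.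
Qed.

Lemma sumR_skip n g i : (i < n)%nat ->
  sumR n (fun j => if Nat.eqb i j then 0 else g j) = sumR n g - g i.
Proof.
  induction n as [|n IH]; intros Hi; [lia|]. simpl.
  destruct (Nat.eq_dec i n) as [->|Hne].
  - rewrite Nat.eqb_refl, (sumR_ext n _ g); [ring|].
    intros j Hj. replace (n =? j)%nat with false by (symmetry; apply Nat.eqb_neq; lia).
    reflexivity.
  - replace (i =? n)%nat with false by (symmetry; apply Nat.eqb_neq; lia).
    rewrite IH by lia. ring.
Qed.

Lemma cross_sum_eq beta M : (forall m, (m < M)%nat -> 0 < beta m) ->
  cross_sum beta M = (sumR M (fun i => sqrt (beta i))) ^ 2 - sumR M beta.
Proof.
  intros Hb. unfold cross_sum.
  rewrite (sumR_ext M _ (fun i => sqrt (beta i) * sumR M (fun j => sqrt (beta j)) - beta i)).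
  - rewrite sumR_sub, sumR_scal_r. ring.
  - intros i Hi.
    rewrite (sumR_ext M _ (fun j => if Nat.eqb i j then 0 else sqrt (beta i) * sqrt (beta j))).
    + rewrite sumR_skip, sumR_scal_l, sqrt_sqrt by (lra || (left; auto) || auto). ring.
    + intros j Hj. destruct (Nat.eqb i j); [reflexivity|]. apply sqrt_mult; left; auto.
Qed.

Lemma sumR_sqr_lt_sqr_sumR a n : (2 <= n)%nat -> (forall i, (i < n)%nat -> 0 < a i) ->
  sumR n (fun i => a i * a i) < (sumR n a) ^ 2.
Proof.
  induction n as [|n IH]; intros Hn Ha; [lia|]. simpl.
  assert (0 < a n) by (apply Ha; lia).
  destruct (Nat.eq_dec n 1) as [->|Hne].
  - assert (0 < a 0%nat) by (apply Ha; lia). simpl. nra.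
  - assert (sumR n (fun i => a i * a i) < (sumR n a) ^ 2)
      by (apply IH; [lia|intros; apply Ha; lia]).
    assert (0 <= sumR n a) by (apply sumR_nonneg; intros; left; apply Ha; lia).
    nra.
Qed.

Lemma cross_sum_pos beta M : (2 <= M)%nat -> (forall m, (m < M)%nat -> 0 < beta m) ->
  0 < cross_sum beta M.
Proof.
  intros HM Hb. rewrite cross_sum_eq by exact Hb.
  rewrite <- (sumR_ext M (fun i => sqrt (beta i) * sqrt (beta i)) beta)
    by (intros; apply sqrt_sqrt; left; auto).
  apply Rlt_0_minus, sumR_sqr_lt_sqr_sumR; [exact HM|].
  intros; apply sqrt_lt_R0; auto.
Qed.

Lemma cos_le_cos_abs d e : - e <= d <= e -> e <= PI -> cos e <= cos d.
Proof.
  intros Hd He. destruct (Rle_dec 0 d).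
  - apply cos_decr_1; lra.
  - rewrite <- (cos_neg d). apply cos_decr_1; lra.
Qed.

Section Bisection.

Variables (Q : R -> R) (A B x : R).
Hypothesis HB : 0 < B.
Hypothesis HQ : forall p, Q p = A + B * cos (p - x).

(* The comparison Q lo < Q hi is a comparison of the distances from x to lo and hi. *)
Lemma a1_step_inv lo hi : lo <= x <= hi -> hi - lo <= PI ->
  fst (a1_step Q (lo, hi)) <= x <= snd (a1_step Q (lo, hi)) /\
  snd (a1_step Q (lo, hi)) - fst (a1_step Q (lo, hi)) = (hi - lo) / 2.
Proof.
  intros Hx HL. unfold a1_step. rewrite !HQ.
  replace (lo - x) with (- (x - lo)) by ring. rewrite cos_neg.
  destruct (Rlt_dec _ _) as [Hlt|Hge]; simpl.
  - assert (cos (x - lo) < cos (hi - x)) by (apply (Rmult_lt_reg_l B); lra).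
    assert (hi - x < x - lo) by (apply cos_decreasing_0; lra). lra.
  - assert (cos (hi - x) <= cos (x - lo))
      by (apply Rnot_lt_le in Hge; apply (Rmult_le_reg_l B); lra).
    assert (x - lo <= hi - x) by (apply cos_decr_0; lra). lra.
Qed.

Lemma a1_iter_inv k lo hi : lo <= x <= hi -> hi - lo <= PI ->
  fst (a1_iter Q k (lo, hi)) <= x <= snd (a1_iter Q k (lo, hi)) /\
  snd (a1_iter Q k (lo, hi)) - fst (a1_iter Q k (lo, hi)) = (hi - lo) / 2 ^ k.
Proof.
  revert lo hi. induction k as [|k IH]; intros lo hi Hx HL.
  - simpl. split; [lra|field].
  - change (a1_iter Q (S k) (lo, hi)) with (a1_iter Q k (a1_step Q (lo, hi))).
    destruct (a1_step_inv lo hi Hx HL) as [Hx' Hlen].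
    destruct (a1_step Q (lo, hi)) as [l h]. simpl in Hx', Hlen.
    assert (0 < 2 ^ k) by (apply pow_lt; lra).
    destruct (IH l h Hx' ltac:(lra)) as [Hin Hlen'].
    split; [exact Hin|]. rewrite Hlen', Hlen. simpl. field. lra.
Qed.

Lemma a1_first_arc : - (PI / 2) < x <= 3 * (PI / 2) ->
  let lh := if Rlt_dec (Q (- PI)) (Q 0) then (- PI / 2, PI / 2)
            else (PI / 2, 3 * PI / 2) in
  fst lh <= x <= snd lh /\ snd lh - fst lh = PI.
Proof.
  intros Hx. pose proof PI_RGT_0. rewrite !HQ.
  replace (- PI - x) with (- (x + PI)) by ring.
  rewrite cos_neg, neg_cos, Rminus_0_l, cos_neg.
  destruct (Rlt_dec _ _) as [Hlt|Hge]; simpl.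
  - assert (0 < cos x) by (apply (Rmult_lt_reg_l B); lra).
    destruct (Rlt_dec x (PI / 2)); [lra|].
    assert (cos x <= 0); [|lra].
    destruct (Req_dec x (PI / 2)) as [->|]; [rewrite cos_PI2; lra|].
    destruct (Req_dec x (3 * (PI / 2))) as [->|]; [rewrite cos_3PI2; lra|].
    left; apply cos_lt_0; lra.
  - assert (cos x <= 0) by (apply Rnot_lt_le in Hge; apply (Rmult_le_reg_l B); lra).
    destruct (Rlt_dec x (PI / 2)); [|lra].
    assert (0 < cos x) by (apply cos_gt_0; lra). lra.
Qed.

Lemma a1_close_window N : (1 <= N)%nat -> - (PI / 2) < x <= 3 * (PI / 2) ->
  cos (PI / 2 ^ N) <= cos (a1 Q N - x).
Proof.
  intros HN Hx. pose proof PI_RGT_0. unfold a1.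
  pose proof (a1_first_arc Hx) as Harc. cbv zeta in Harc.
  destruct (if Rlt_dec (Q (- PI)) (Q 0) then _ else _) as [lo hi].
  simpl in Harc. destruct Harc as [Hin Hlen].
  destruct (a1_iter_inv (N - 1) lo hi Hin ltac:(lra)) as [Hin' Hlen'].
  destruct (a1_iter Q (N - 1) (lo, hi)) as [l h]. simpl in *.
  assert (Hpow : 2 ^ N = 2 * 2 ^ (N - 1)).
  { destruct N as [|N]; [lia|]. simpl. rewrite Nat.sub_0_r. reflexivity. }
  assert (1 <= 2 ^ (N - 1)) by (apply pow_R1_Rle; lra).
  assert (Hhalf : PI / 2 ^ N = (h - l) / 2) by (rewrite Hlen', Hlen, Hpow; field; lra).
  apply cos_le_cos_abs; [lra|].
  rewrite Hhalf, Hlen', Hlen.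
  apply (Rmult_le_reg_r (2 * 2 ^ (N - 1))); [lra|].
  field_simplify; nra.
Qed.

End Bisection.

Lemma a1_close Q A B x N : 0 < B -> (forall p, Q p = A + B * cos (p - x)) ->
  (1 <= N)%nat -> - 2 * PI <= x < 2 * PI ->
  cos (PI / 2 ^ N) <= cos (a1 Q N - x).
Proof.
  intros HB HQ HN Hx. pose proof PI_RGT_0.
  assert (Hshift : forall k p, cos (p - (x + 2 * INR k * PI)) = cos (p - x)
                          /\ cos (p - (x - 2 * INR k * PI)) = cos (p - x)).
  { intros k p. split.
    - rewrite <- (cos_period (p - (x + 2 * INR k * PI)) k). f_equal. ring.
    - rewrite <- (cos_period (p - x) k). f_equal. ring. }
  simpl in Hshift.
  destruct (Rle_dec x (- (PI / 2))) as [Hlo|Hlo];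
    [|destruct (Rle_dec x (3 * (PI / 2))) as [Hhi|Hhi]].
  - rewrite <- (proj1 (Hshift 1%nat _)).
    apply (a1_close_window Q A B); [exact HB| |exact HN|simpl; lra].
    intros p. rewrite HQ, (proj1 (Hshift 1%nat p)). reflexivity.
  - apply (a1_close_window Q A B); [exact HB|exact HQ|exact HN|lra].
  - rewrite <- (proj2 (Hshift 1%nat _)).
    apply (a1_close_window Q A B); [exact HB| |exact HN|simpl; lra].
    intros p. rewrite HQ, (proj2 (Hshift 1%nat p)). reflexivity.
Qed.

Lemma polar_form X Y : 0 < X ^ 2 + Y ^ 2 -> exists al, - PI <= al <= PI /\
  X = sqrt (X ^ 2 + Y ^ 2) * cos al /\ Y = sqrt (X ^ 2 + Y ^ 2) * sin al.
Proof.
  intros H. set (r := sqrt (X ^ 2 + Y ^ 2)).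
  assert (Hr : 0 < r) by (apply sqrt_lt_R0; exact H).
  assert (Hr2 : r ^ 2 = X ^ 2 + Y ^ 2) by (apply pow2_sqrt; lra).
  assert (Hb : -1 <= X / r <= 1).
  { split; apply (Rmult_le_reg_r r); try lra; unfold Rdiv;
      rewrite Rmult_assoc, Rinv_l by lra; nra. }
  assert (Hs : sqrt (1 - (X / r)²) = Rabs Y / r).
  { rewrite <- (sqrt_pow2 (Rabs Y / r)).
    - f_equal. unfold Rsqr, Rdiv. rewrite Rpow_mult_distr, pow2_abs.
      replace (Y ^ 2) with (r ^ 2 - X ^ 2) by lra. field. lra.
    - apply Rmult_le_pos; [apply Rabs_pos|left; apply Rinv_0_lt_compat; lra]. }
  pose proof (acos_bound (X / r)).
  destruct (Rle_dec 0 Y).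
  - exists (acos (X / r)). split; [lra|].
    rewrite cos_acos, sin_acos, Hs, Rabs_right by (auto || lra). split; field; lra.
  - exists (- acos (X / r)). split; [lra|].
    rewrite cos_neg, sin_neg, cos_acos, sin_acos, Hs, Rabs_left by (auto || lra).
    split; field; lra.
Qed.

Lemma add_phasor_norm2 X Y a : 0 < X ^ 2 + Y ^ 2 -> exists al, - PI <= al <= PI /\
  forall u, (X + a * cos u) ^ 2 + (Y + a * sin u) ^ 2
            = X ^ 2 + Y ^ 2 + a ^ 2 + 2 * a * sqrt (X ^ 2 + Y ^ 2) * cos (u - al).
Proof.
  intros H. destruct (polar_form X Y H) as [al [Hal [HX HY]]].
  exists al. split; [exact Hal|]. intros u.
  set (r := sqrt (X ^ 2 + Y ^ 2)) in *.
  assert (Hr2 : r ^ 2 = X ^ 2 + Y ^ 2) by (apply pow2_sqrt; lra).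
  rewrite <- Hr2, HX, HY at 1. rewrite cos_minus.
  pose proof (sin2_cos2 al). pose proof (sin2_cos2 u). unfold Rsqr in *.
  transitivity (r ^ 2 * (sin al * sin al + cos al * cos al)
    + a ^ 2 * (sin u * sin u + cos u * cos u)
    + 2 * a * r * (cos u * cos al + sin u * sin al)); [ring|].
  rewrite H0, H1. ring.
Qed.

Definition re_sum (beta theta f : nat -> R) K :=
  sumR K (fun i => sqrt (beta i) * cos (f i - theta i)).
Definition im_sum (beta theta f : nat -> R) K :=
  sumR K (fun i => sqrt (beta i) * sin (f i - theta i)).
Definition norm2_sum (beta theta f : nat -> R) K :=
  re_sum beta theta f K ^ 2 + im_sum beta theta f K ^ 2.

Definition set_phase (f : nat -> R) (m : nat) (psi : R) : nat -> R :=
  fun j => if Nat.eqb j m then psi else f j.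

Lemma Qpow_norm2_sum P beta theta f K : Qpow P beta theta f K = P * norm2_sum beta theta f K.
Proof. reflexivity. Qed.

Lemma sumR_set_phase (g : R -> nat -> R) f m psi :
  sumR (S m) (fun i => g (set_phase f m psi i) i) = sumR m (fun i => g (f i) i) + g psi m.
Proof.
  simpl. unfold set_phase. rewrite Nat.eqb_refl. f_equal. apply sumR_ext.
  intros i Hi. replace (i =? m)%nat with false by (symmetry; apply Nat.eqb_neq; lia).
  reflexivity.
Qed.

Lemma norm2_sum_set_phase beta theta f m psi :
  norm2_sum beta theta (set_phase f m psi) (S m)
  = (re_sum beta theta f m + sqrt (beta m) * cos (psi - theta m)) ^ 2
    + (im_sum beta theta f m + sqrt (beta m) * sin (psi - theta m)) ^ 2.
Proof.
  unfold norm2_sum, re_sum, im_sum.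
  rewrite (sumR_set_phase (fun p i => sqrt (beta i) * cos (p - theta i))).
  rewrite (sumR_set_phase (fun p i => sqrt (beta i) * sin (p - theta i))).
  reflexivity.
Qed.

Lemma phases_S P beta theta N m : (1 <= m)%nat ->
  phases P beta theta N (S m) = set_phase (phases P beta theta N m) m
    (a1 (fun psi => Qpow P beta theta (set_phase (phases P beta theta N m) m psi) (S m)) N).
Proof. intros Hm. destruct m as [|m]; [lia|]. reflexivity. Qed.

Lemma cos_PI_div_pow2_nonneg N : (1 <= N)%nat -> 0 <= cos (PI / 2 ^ N).
Proof.
  intros HN. pose proof PI_RGT_0.
  assert (2 <= 2 ^ N).
  { destruct N as [|N]; [lia|]. simpl. pose proof (pow_R1_Rle 2 N ltac:(lra)). lra. }
  apply cos_ge_0.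
  - assert (0 < PI / 2 ^ N) by (apply Rdiv_lt_0_compat; lra). lra.
  - apply (Rmult_le_reg_r (2 ^ N)); [lra|]. unfold Rdiv.
    rewrite Rmult_assoc, Rinv_l by lra. nra.
Qed.

Lemma gain_step_bound T n a c s :
  0 <= a -> 0 <= c -> 0 <= s -> c ^ 2 * s ^ 2 <= T -> T <= n ->
  T + a ^ 2 + 2 * c ^ 2 * a * s <= n + a ^ 2 + 2 * c * a * sqrt n.
Proof.
  intros Ha Hc Hs HT Hn.
  assert (c * s <= sqrt n).
  { rewrite <- (sqrt_pow2 (c * s)) by (apply Rmult_le_pos; lra).
    apply sqrt_le_1_alt. rewrite Rpow_mult_distr. lra. }
  assert (0 <= c * a) by (apply Rmult_le_pos; lra).
  nra.
Qed.

Section Protocol.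

Variables (P : R) (beta theta : nat -> R) (M N : nat).
Hypothesis Hbeta : forall m, (m < M)%nat -> 0 < beta m.
Hypothesis Htheta : forall m, (m < M)%nat -> - PI <= theta m < PI.
Hypothesis HP : 0 < P.
Hypothesis HN : (1 <= N)%nat.

Lemma phases_step_gain m : (1 <= m)%nat -> (m < M)%nat ->
  0 < norm2_sum beta theta (phases P beta theta N m) m ->
  norm2_sum beta theta (phases P beta theta N m) m + beta m
    + 2 * cos (PI / 2 ^ N) * sqrt (beta m) * sqrt (norm2_sum beta theta (phases P beta theta N m) m)
  <= norm2_sum beta theta (phases P beta theta N (S m)) (S m).
Proof.
  intros Hm HmM Hpos. rewrite phases_S by exact Hm.
  set (prev := phases P beta theta N m) in *.
  set (Qm := fun psi => Qpow P beta theta (set_phase prev m psi) (S m)).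
  rewrite norm2_sum_set_phase. unfold norm2_sum in Hpos |- *.
  set (X := re_sum beta theta prev m) in *. set (Y := im_sum beta theta prev m) in *.
  set (a := sqrt (beta m)).
  destruct (add_phasor_norm2 X Y a Hpos) as [al [Hal Hexp]].
  set (r := sqrt (X ^ 2 + Y ^ 2)) in *.
  assert (Hr : 0 < r) by (apply sqrt_lt_R0; exact Hpos).
  assert (Ha : 0 < a) by (apply sqrt_lt_R0, Hbeta; exact HmM).
  assert (Ha2 : a ^ 2 = beta m) by (apply pow2_sqrt; left; apply Hbeta; exact HmM).
  assert (HQ : forall p, Qm p = P * (X ^ 2 + Y ^ 2 + a ^ 2)
                               + 2 * P * a * r * cos (p - (theta m + al))).
  { intros p. unfold Qm. rewrite Qpow_norm2_sum, norm2_sum_set_phase, Hexp.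
    replace (p - theta m - al) with (p - (theta m + al)) by ring. ring. }
  assert (Hcos : cos (PI / 2 ^ N) <= cos (a1 Qm N - (theta m + al))).
  { pose proof (Htheta m HmM).
    apply (a1_close Qm (P * (X ^ 2 + Y ^ 2 + a ^ 2)) (2 * P * a * r)); [|exact HQ|exact HN|lra].
    repeat apply Rmult_lt_0_compat; lra. }
  rewrite Hexp, <- Ha2.
  replace (a1 Qm N - theta m - al) with (a1 Qm N - (theta m + al)) by ring.
  assert (0 < a * r) by (apply Rmult_lt_0_compat; lra). nra.
Qed.

Lemma phases_norm2_lower_bound m : (1 <= m <= M)%nat ->
  (1 - cos (PI / 2 ^ N) ^ 2) * sumR m beta
    + cos (PI / 2 ^ N) ^ 2 * (sumR m (fun i => sqrt (beta i))) ^ 2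
  <= norm2_sum beta theta (phases P beta theta N m) m.
Proof.
  set (c := cos (PI / 2 ^ N)).
  assert (Hc0 : 0 <= c) by (apply cos_PI_div_pow2_nonneg, HN).
  assert (Hc1 : c <= 1) by apply COS_bound.
  assert (Hc2 : c ^ 2 <= 1) by nra.
  induction m as [|m IH]; intros Hm; [lia|].
  destruct (Nat.eq_dec m 0) as [->|Hm0].
  - unfold norm2_sum, re_sum, im_sum. simpl.
    pose proof (sqrt_sqrt (beta 0%nat) ltac:(left; apply Hbeta; lia)).
    pose proof (sin2_cos2 (0 - theta 0%nat)). unfold Rsqr in *. nra.
  - specialize (IH ltac:(lia)).
    set (Sb := sumR m beta) in *. set (Sa := sumR m (fun i => sqrt (beta i))) in *.
    set (n := norm2_sum beta theta (phases P beta theta N m) m) in *.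
    set (a := sqrt (beta m)).
    assert (HSb : 0 < Sb) by (apply sumR_pos; [lia|intros; apply Hbeta; lia]).
    assert (HSa : 0 < Sa)
      by (apply sumR_pos; [lia|intros; apply sqrt_lt_R0, Hbeta; lia]).
    assert (Ha : 0 <= a) by apply sqrt_pos.
    assert (Ha2 : a ^ 2 = beta m) by (apply pow2_sqrt; left; apply Hbeta; lia).
    assert (HT : 0 < (1 - c ^ 2) * Sb + c ^ 2 * Sa ^ 2).
    { assert (0 < Sa ^ 2) by (apply pow_lt; exact HSa).
      destruct (Rle_dec Sb (Sa ^ 2)); [nra|].
      assert (0 <= (1 - c ^ 2) * (Sb - Sa ^ 2)) by (apply Rmult_le_pos; lra). nra. }
    pose proof (phases_step_gain m ltac:(lia) ltac:(lia) ltac:(fold n; lra)) as Hgain.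
    fold c n a in Hgain. simpl sumR. fold Sb Sa a. rewrite <- Ha2.
    pose proof (gain_step_bound ((1 - c ^ 2) * Sb + c ^ 2 * Sa ^ 2) n a c Sa
                  Ha Hc0 ltac:(lra) ltac:(nra) IH).
    nra.
Qed.

End Protocol.

Lemma bisection_width_le_acos r N : 0 <= r < 1 ->
  log2 (PI / acos (sqrt r)) <= INR N -> PI / 2 ^ N <= acos (sqrt r).
Proof.
  intros Hr HN. pose proof PI_RGT_0.
  assert (Hs : 0 <= sqrt r < 1)
    by (split; [apply sqrt_pos|rewrite <- sqrt_1; apply sqrt_lt_1_alt; lra]).
  set (u := acos (sqrt r)) in *.
  assert (Hu : 0 < u).
  { pose proof (acos_bound (sqrt r)) as Hb. destruct (Req_dec u 0) as [E|]; [|fold u in Hb; lra].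
    assert (cos u = sqrt r) by (apply cos_acos; lra). rewrite E, cos_0 in *. lra. }
  assert (Hln2 : 0 < ln 2) by (rewrite <- ln_1; apply ln_increasing; lra).
  assert (H2N : 0 < 2 ^ N) by (apply pow_lt; lra).
  assert (Hpu : PI / u <= 2 ^ N).
  { apply Rnot_lt_le. intros Hlt.
    apply (ln_increasing _ _ H2N) in Hlt. rewrite ln_pow in Hlt by lra.
    unfold log2 in HN. apply (Rmult_le_compat_r (ln 2)) in HN; [|lra].
    unfold Rdiv in HN at 1. rewrite Rmult_assoc, Rinv_l in HN by lra. lra. }
  apply (Rmult_le_reg_r (2 ^ N / u)); [apply Rdiv_lt_0_compat; lra|].
  replace (PI / 2 ^ N * (2 ^ N / u)) with (PI / u) by (field; lra).
  replace (u * (2 ^ N / u)) with (2 ^ N) by (field; lra). exact Hpu.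
Qed.

Lemma radicand_le_cos_sqr r N : 0 <= r < 1 ->
  log2 (PI / acos (sqrt r)) <= INR N -> r <= cos (PI / 2 ^ N) ^ 2.
Proof.
  intros Hr HN. pose proof PI_RGT_0.
  assert (Hs : 0 <= sqrt r < 1)
    by (split; [apply sqrt_pos|rewrite <- sqrt_1; apply sqrt_lt_1_alt; lra]).
  assert (sqrt r <= cos (PI / 2 ^ N)).
  { pose proof (bisection_width_le_acos r N Hr HN).
    assert (0 < PI / 2 ^ N) by (apply Rdiv_lt_0_compat; [|apply pow_lt]; lra).
    pose proof (acos_bound (sqrt r)).
    rewrite <- (cos_acos (sqrt r)) at 1 by lra. apply cos_decr_1; lra. }
  rewrite <- (pow2_sqrt r) by lra. nra.
Qed.

Lemma target_le_mixture eta r c2 Sa Sb :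
  0 < Sa ^ 2 - Sb -> r = eta - (1 - eta) * Sb / (Sa ^ 2 - Sb) -> r <= c2 ->
  eta * Sa ^ 2 <= (1 - c2) * Sb + c2 * Sa ^ 2.
Proof.
  intros HC Hr Hrc.
  assert (0 <= (c2 - r) * (Sa ^ 2 - Sb)) by (apply Rmult_le_pos; lra).
  assert (r * (Sa ^ 2 - Sb) = eta * (Sa ^ 2 - Sb) - (1 - eta) * Sb)
    by (rewrite Hr; field; lra).
  nra.
Qed.

Theorem corollary1 (M N : nat) (beta theta : nat -> R) (P etahat : R)
  (HM : (2 <= M)%nat)
  (Hbeta : forall m, (m < M)%nat -> 0 < beta m)
  (Htheta : forall m, (m < M)%nat -> - PI <= theta m < PI)
  (HP : 0 < P)
  (HN : (1 <= N)%nat)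
  (Heta : 0 < etahat <= 1)
  (Hwd : 0 <= radicand beta M etahat < 1)
  (HNbound : log2 (PI / acos (sqrt (radicand beta M etahat))) <= INR N) :
  etahat <= efficiency P beta theta M N.
Proof.
  set (Sa := sumR M (fun i => sqrt (beta i))).
  assert (HSa : 0 < Sa) by (apply sumR_pos; [lia|intros; apply sqrt_lt_R0, Hbeta; auto]).
  assert (HC : cross_sum beta M = Sa ^ 2 - sumR M beta) by (apply cross_sum_eq, Hbeta).
  assert (Htarget : etahat * Sa ^ 2 <= (1 - cos (PI / 2 ^ N) ^ 2) * sumR M beta
                                       + cos (PI / 2 ^ N) ^ 2 * Sa ^ 2).
  { apply (target_le_mixture etahat (radicand beta M etahat)).
    - rewrite <- HC. apply cross_sum_pos; assumption.
    - unfold radicand. rewrite HC. reflexivity.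
    - apply radicand_le_cos_sqr; assumption. }
  pose proof (phases_norm2_lower_bound P beta theta M N Hbeta Htheta HP HN M
                ltac:(lia)) as Hbound.
  fold Sa in Hbound.
  assert (HQs : 0 < P * Sa ^ 2) by (apply Rmult_lt_0_compat; [|apply pow_lt]; lra).
  unfold efficiency, Qd, Qstar. rewrite Qpow_norm2_sum. fold Sa.
  apply (Rmult_le_reg_r (P * Sa ^ 2)); [exact HQs|].
  unfold Rdiv. rewrite Rmult_assoc, Rinv_l, Rmult_1_r by lra.
  nra.
Qed.
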